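(* Let $(M,d)$ be a bounded metric space with uniform relative normal structure such that $\mathcal A(M)$ is compact, and let $\mathcal S$ be a group acting on $M$ such that each $s\in\mathcal S$ is orbit-nonexpansive. Then there is $x\in M$ with $s(x)=x$ for all $s\in\mathcal S$.
   Context: For a metric space $(M,d)$, a mapping $T:M\to M$ and $x\in M$, the orbit of $x$ is $o_T(x)=\{x\}\cup\{T^nx:n\in\mathbb N\}$. For $x\in M$ and bounded $A\subseteq M$, $D(x,A)=\sup\{d(x,a):a\in A\}$ and $\delta(A)=\sup\{d(x,y):x,y\in A\}$. $T$ is orbit-nonexpansive if $d(Tx,Ty)\le D(x,o_T(y))$ for all $x,y\in M$. A group $\mathcal S$ acts on $M$ if each $s\in\mathcal S$ defines a map $M\to M$, the identity acts as the identity map, and $(s\cdot t)(x)=s(t(x))$. A subset of $M$ is admissible if it is an intersection of closed balls of $M$; $\mathcal A(M)$ denotes the family of admissible sets. $\mathcal A(M)$ is compact if every subfamily of $\mathcal A(M)$ all of whose finite intersections are nonempty has nonempty intersection. $(M,d)$ has uniform relative normal structure (URNS) if there is $c\in(0,1)$ such that for every admissible $A$ with $\delta(A)>0$: (i) there exists $z_A\in M$ with $D(z_A,A)\le c\,\delta(A)$; and (ii) every $x\in M$ with $D(x,A)\le c\,\delta(A)$ satisfies $d(x,z_A)\le c\,\delta(A)$. *)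

From HB Require Import structures.
From mathcomp Require Import all_boot all_order all_algebra.
From mathcomp Require Import all_classical all_reals.
Set Implicit Arguments. Unset Strict Implicit. Unset Printing Implicit Defensive.
Import Order.TTheory GRing.Theory Num.Theory.
Local Open Scope ring_scope.
Local Open Scope classical_set_scope.

Section MetricDefs.
Variables (R : realType) (M : Type) (d : M -> M -> R).

Definition is_metric : Prop :=
  (forall x y, 0 <= d x y) /\ (forall x y, d x y = 0 <-> x = y) /\
  (forall x y, d x y = d y x) /\ (forall x y z, d x z <= d x y + d y z).

Definition metric_bounded : Prop := exists B : R, forall x y, d x y <= B.

Definition orbit (T : M -> M) (x : M) : set M :=
  [set y | exists n : nat, y = iter n T x].

Definition Dist (x : M) (A : set M) : R := sup [set d x a | a in A].

Definition diam (A : set M) : R :=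
  sup [set r | exists x y, A x /\ A y /\ r = d x y].

Definition orbit_nonexpansive (T : M -> M) : Prop :=
  forall x y, d (T x) (T y) <= Dist x (orbit T y).

Definition closed_ball (x : M) (r : R) : set M := [set y | d x y <= r].

Definition admissible (A : set M) : Prop :=
  exists F : set (M * R), (forall p, F p -> 0 <= p.2) /\
    A = [set y | forall p, F p -> closed_ball p.1 p.2 y].

Definition admissible_compact : Prop :=
  forall F : set (set M), (forall A, F A -> admissible A) ->
    (forall G : set (set M), G `<=` F -> finite_set G ->
        exists x, forall A, G A -> A x) ->
    exists x, forall A, F A -> A x.

Definition URNS : Prop :=
  exists c : R, 0 < c < 1 /\
    forall A : set M, admissible A -> 0 < diam A ->
      exists zA : M, Dist zA A <= c * diam A /\
        forall x, Dist x A <= c * diam A -> d x zA <= c * diam A.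

End MetricDefs.

(* The proof builds a chain of nonempty invariant admissible sets
     M = A_0, A_1, A_2, ...   with   δ(A_n) <= c^n δ(M):
   A_{n+1} is the set of "relative Chebyshev centres" of A_n at radius c δ(A_n),
   i.e. the points within c δ(A_n) of all of A_n and of all such points.  This
   set is an intersection of balls, it is invariant because the group maps are
   orbit-nonexpansive and the group is closed under inverses, and URNS makes it
   nonempty.  Choosing x_n in A_n gives d(x_n, x_{n+1}) <= c^{n+1} δ(M); by
   compactness of A(M) the nested balls B(x_n, c^{n+1} δ(M) / (1-c)) have a
   common point x.  Orbit-nonexpansiveness bounds d(gx, x) by a multiple of
   c^n for every n, so gx = x. *)
From Pilot Require Import Defs.
From HB Require Import structures.
From mathcomp Require Import all_boot all_order all_algebra.
From mathcomp Require Import all_classical all_reals all_analysis.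
From mathcomp Require Import ring lra.
Import Order.TTheory GRing.Theory Num.Theory.
Local Open Scope ring_scope.
Local Open Scope classical_set_scope.
Set Implicit Arguments. Unset Strict Implicit.

Lemma le0_of_geometric_bound (R : realType) (c K e : R) :
  0 <= c < 1 -> (forall n, e <= K * c ^+ n) -> e <= 0.
Proof.
case/andP=> c0 c1 bound; rewrite leNgt; apply/negP => e0.
have c_lt1 : `|c| < 1 by rewrite ger0_norm.
have [m _ small] := cvgr_lt 0 (cvg_geometric K c_lt1) e e0.
by have := small m (leqnn m); rewrite /= ltNge bound.
Qed.

Lemma nat_finite_bounded (S : set nat) :
  finite_set S -> exists N, forall k, S k -> (k <= N)%N.
Proof.
move=> /finite_fsetP [X ->]; exists (\max_(k <- finmap.enum_fset X) k) => k kX.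
exact: (@leq_bigmax_seq _ _ xpredT id).
Qed.

Section MetricSpace.
Variables (R : realType) (M : Type) (d : M -> M -> R).
Hypothesis d_metric : is_metric d.
Variable B : R.
Hypothesis d_bounded : forall x y, d x y <= B.

Lemma d_ge0 x y : 0 <= d x y.
Proof. by case: d_metric. Qed.

Lemma d_eq0 x y : d x y = 0 -> x = y.
Proof. by case: d_metric => _ [/(_ x y) [] ]. Qed.

Lemma d_xx x : d x x = 0.
Proof. by case: d_metric => _ [/(_ x x) [_ ->] ]. Qed.

Lemma d_sym x y : d x y = d y x.
Proof. by case: d_metric => _ [_ []]. Qed.

Lemma d_tri x y z : d x z <= d x y + d y z.
Proof. by case: d_metric => _ [_ [_ ]]. Qed.

Lemma Dist_ub (A : set M) x a : A a -> d x a <= Dist d x A.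
Proof.
move=> Aa; apply: sup_upper_bound; last by exists a.
split; first by exists (d x a), a.
by exists B => _ [b _ <-].
Qed.

Lemma Dist_le (A : set M) x a0 r :
  A a0 -> (forall a, A a -> d x a <= r) -> Dist d x A <= r.
Proof.
move=> Aa0 h; apply: ge_sup; first by exists (d x a0), a0.
by move=> _ [a Aa <-]; apply: h.
Qed.

Lemma diam_ub (A : set M) x y : A x -> A y -> d x y <= diam d A.
Proof.
move=> Ax Ay; apply: sup_upper_bound; last by exists x, y.
split; first by exists (d x y), x, y.
by exists B => _ [a [b [_ [_ ->]]]].
Qed.

Lemma diam_le (A : set M) a0 r :
  A a0 -> (forall x y, A x -> A y -> d x y <= r) -> diam d A <= r.
Proof.
move=> Aa0 h; apply: ge_sup; first by exists (d a0 a0), a0, a0.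
by move=> _ [a [b [Aa [Ab ->]]]]; apply: h.
Qed.

Lemma diam_ge0 (A : set M) x : A x -> 0 <= diam d A.
Proof. by move=> Ax; rewrite -(d_xx x); apply: diam_ub. Qed.

Lemma ball_admissible x r : 0 <= r -> admissible d (Defs.closed_ball d x r).
Proof.
move=> r0; exists [set (x, r)]; split; first by move=> p ->.
by apply/seteqP; split => y /= => [h p -> // | /(_ (x, r) erefl)].
Qed.

Lemma setT_admissible : admissible d setT.
Proof. by exists set0; split => //; apply/seteqP; split => y //= _ p. Qed.

Lemma nested_balls_meet (xs : nat -> M) (rad : nat -> R) :
  admissible_compact d -> (forall n, 0 <= rad n) ->
  (forall n k, d (xs n) (xs (n + k)%N) + rad (n + k)%N <= rad n) ->
  exists x, forall n, d (xs n) x <= rad n.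
Proof.
move=> compact rad_ge0 nested.
pose balls := [set Defs.closed_ball d (xs n) (rad n) | n in [set: nat]].
have [x x_in] : exists x, forall Bl, balls Bl -> Bl x.
  apply: compact => [_ [n _ <-]|F sub finF]; first exact: ball_admissible.
  have /boolp.choice [idx idxP] : forall Bl, exists n,
      balls Bl -> Bl = Defs.closed_ball d (xs n) (rad n).
    move=> Bl; case: (pselect (balls Bl)) => [[n _ <-]|not_ball].
      by exists n.
    by exists 0%N => /not_ball.
  have [N idx_le] := nat_finite_bounded (finite_image idx finF).
  exists (xs N) => Bl FBl; rewrite (idxP _ (sub _ FBl)) /Defs.closed_ball /=.
  have le : (idx Bl <= N)%N by apply: idx_le; exists Bl.
  rewrite -(subnKC le).
  have := nested (idx Bl) (N - idx Bl)%N; have := rad_ge0 (idx Bl + (N - idx Bl))%N.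
  lra.
by exists x => n; apply: (x_in (Defs.closed_ball d (xs n) (rad n))); exists n.
Qed.

Lemma geometric_sequence_limit (xs : nat -> M) (c D : R) :
  admissible_compact d -> 0 <= c < 1 -> 0 <= D ->
  (forall n, d (xs n) (xs n.+1) <= c ^+ n.+1 * D) ->
  exists x, forall n, d (xs n) x <= c ^+ n.+1 * D / (1 - c).
Proof.
move=> compact /andP [c0 c1] D0 step.
pose rad n := c ^+ n.+1 * D / (1 - c).
apply: (@nested_balls_meet xs rad) => // [n|n k].
  by rewrite divr_ge0 ?mulr_ge0 ?exprn_ge0 ?subr_ge0 // ltW.
have radS m : rad m.+1 + c ^+ m.+1 * D = rad m.
  by rewrite /rad exprS; field; rewrite subr_eq0 gt_eqF.
elim: k => [|k IH]; first by rewrite addn0 d_xx add0r.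
rewrite addnS; have := d_tri (xs n) (xs (n + k)%N) (xs (n + k).+1).
have := step (n + k)%N; have := radS (n + k)%N.
lra.
Qed.

Section GroupAction.
Variables (G : Type) (mul : G -> G -> G) (one : G) (inv : G -> G).
Variable act : G -> M -> M.
Hypothesis mulgV : forall a, mul a (inv a) = one.
Hypothesis act1 : forall x, act one x = x.
Hypothesis actM : forall s t x, act (mul s t) x = act s (act t x).
Hypothesis act_nonexp : forall s, orbit_nonexpansive d (act s).

Definition invariant (S : set M) : Prop := forall g s, S s -> S (act g s).

Lemma invariant_iter (S : set M) g k s :
  invariant S -> S s -> S (iter k (act g) s).
Proof. by move=> invS Ss; elim: k => //= k IH; apply: invS. Qed.

(* If an invariant set lies in the r-ball about x, it lies in the r-ball
   about every g x: write s = g (g^-1 s) and use orbit-nonexpansiveness. *)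
Lemma invariant_radius (S : set M) x r g :
  invariant S -> (forall s, S s -> d s x <= r) ->
  forall s, S s -> d s (act g x) <= r.
Proof.
move=> invS near_x s Ss.
set b := act (inv g) s.
have Sb : S b by apply: invS.
have -> : s = act g b by rewrite /b -actM mulgV act1.
rewrite d_sym; apply: le_trans (act_nonexp g x b) _.
apply: (@Dist_le _ _ b); first by exists 0%N.
by move=> _ [n ->]; rewrite d_sym; apply: near_x; apply: invariant_iter.
Qed.

Lemma displacement_le (A : set M) g y x rho :
  invariant A -> A y -> d y x <= rho ->
  d (act g x) x <= 2 * rho + 2 * diam d A.
Proof.
move=> invA Ay yx.
have images_close : d (act g x) (act g y) <= rho + diam d A.
  apply: le_trans (act_nonexp g x y) _.
  apply: (@Dist_le _ _ y); first by exists 0%N.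
  move=> _ [k ->]; apply: le_trans (d_tri x y _) _; rewrite (d_sym x).
  by apply: lerD => //; apply: diam_ub => //; apply: invariant_iter.
have y_moved : d (act g y) y <= diam d A by apply: diam_ub => //; apply: invA.
have := d_tri (act g x) (act g y) x; have := d_tri (act g y) y x.
lra.
Qed.

Definition centers (A : set M) (r : R) : set M :=
  [set y | forall a, A a -> d a y <= r].

Definition relative_centers (A : set M) (r : R) : set M :=
  [set y | centers A r y /\ forall w, centers A r w -> d w y <= r].

Lemma centers_invariant A r : invariant A -> invariant (centers A r).
Proof. by move=> invA g y Cy; apply: invariant_radius. Qed.

Lemma relative_centers_invariant A r :
  invariant A -> invariant (relative_centers A r).
Proof.
move=> invA g y [Cy far]; split; first exact: centers_invariant.
exact: invariant_radius (centers_invariant invA) far.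
Qed.

Lemma relative_centers_admissible A r :
  0 <= r -> admissible d (relative_centers A r).
Proof.
move=> r0; exists [set p | (A p.1 \/ centers A r p.1) /\ p.2 = r].
split; first by move=> p [_ ->].
apply/seteqP; split => y /=.
  by move=> [Cy far] [p q] /= [[Ap|Cp] ->]; [apply: Cy | apply: far].
move=> in_balls; split => [a Aa|w Cw].
  by apply: (in_balls (a, r)); split => //; left.
by apply: (in_balls (w, r)); split => //; right.
Qed.

Lemma relative_centers_diam A r z :
  relative_centers A r z -> diam d (relative_centers A r) <= r.
Proof. by move=> Rz; apply: (diam_le Rz) => x y [Cx _] [_]; apply. Qed.

Definition good_set (A : set M) : Prop :=
  (exists x, A x) /\ invariant A /\ admissible d A.

Lemma good_setT (x0 : M) : good_set setT.
Proof. by split; [exists x0 | split; [| exact: setT_admissible]]. Qed.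

Variable c : R.
Hypothesis c_range : 0 < c < 1.
Hypothesis c_urns : forall A : set M, admissible d A -> 0 < diam d A ->
  exists zA : M, Dist d zA A <= c * diam d A /\
    forall x, Dist d x A <= c * diam d A -> d x zA <= c * diam d A.

Lemma relative_centers_nonempty A :
  good_set A -> exists z, relative_centers A (c * diam d A) z.
Proof.
case=> [[a0 Aa0] [_ adA]].
have [dpos|dle0] := ltP 0 (diam d A); last first.
  have d0 : diam d A = 0 by apply/le_anti/andP; split; last exact: diam_ge0 Aa0.
  rewrite d0 mulr0; exists a0; split => [a Aa|w Cw].
    by rewrite -d0; apply: diam_ub.
  by rewrite d_sym; apply: Cw.
have [z [zA_close z_unique]] := c_urns adA dpos.
have Cz : centers A (c * diam d A) z.
  by move=> a Aa; rewrite d_sym; apply: le_trans zA_close; apply: Dist_ub.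
exists z; split => // w Cw; apply: z_unique.
by apply: (Dist_le Aa0) => a Aa; rewrite d_sym; apply: Cw.
Qed.

Lemma chebyshev_step A : good_set A ->
  exists A', good_set A' /\ diam d A' <= c * diam d A /\
    forall a x, A a -> A' x -> d a x <= c * diam d A.
Proof.
move=> goodA; have [z Rz] := relative_centers_nonempty goodA.
have [_ [invA _]] := goodA.
have [c0 _] : 0 < c /\ c < 1 by apply/andP.
have r0 : 0 <= c * diam d A.
  by case: goodA => [[a Aa] _]; apply: mulr_ge0; [exact: ltW | exact: diam_ge0 Aa].
exists (relative_centers A (c * diam d A)); split; [split; [|split]|split].
- by exists z.
- exact: relative_centers_invariant.
- exact: relative_centers_admissible.
- exact: relative_centers_diam Rz.
- by move=> a x Aa [Cx _]; apply: Cx.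
Qed.

Lemma shrinking_chain (x0 : M) : exists As : nat -> set M, forall n,
  good_set (As n) /\ diam d (As n) <= c ^+ n * diam d setT /\
  forall a x, As n a -> As n.+1 x -> d a x <= c ^+ n.+1 * diam d setT.
Proof.
have [c0 _] : 0 < c /\ c < 1 by apply/andP.
have /boolp.choice [next nextP] : forall A, exists A', good_set A ->
    good_set A' /\ diam d A' <= c * diam d A /\
    forall a x, A a -> A' x -> d a x <= c * diam d A.
  move=> A; case: (pselect (good_set A)) => [/chebyshev_step [A' ?]|not_good].
    by exists A'.
  by exists A => /not_good.
pose As n := iter n next setT.
have good n : good_set (As n).
  by elim: n => [|n IH]; [exact: good_setT | case: (nextP _ IH)].
have diamAs n : diam d (As n) <= c ^+ n * diam d setT.
  elim: n => [|n IH]; first by rewrite expr0 mul1r.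
  have [_ [shrink _]] := nextP _ (good n).
  rewrite exprS -mulrA; apply: le_trans shrink _.
  by rewrite ler_wpM2l // ltW.
exists As => n; split => //; split => // a x Aa Ax.
have [_ [_ close]] := nextP _ (good n); apply: le_trans (close _ _ Aa Ax) _.
by rewrite exprS -mulrA ler_wpM2l // ltW.
Qed.

Lemma common_fixed_point (x0 : M) :
  admissible_compact d -> exists x, forall g, act g x = x.
Proof.
move=> compact; have [c0 c1] : 0 < c /\ c < 1 by apply/andP.
have c_ge0_lt1 : 0 <= c < 1 by rewrite ltW.
have [As AsP] := shrinking_chain x0.
have /boolp.choice [xs xsA] : forall n, exists x, As n x.
  by move=> n; have [[[x ?] _] _] := AsP n; exists x.
set D0 := diam d setT.
have D0_ge0 : 0 <= D0 := diam_ge0 (x := x0) I.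
have [x xs_x] : exists x, forall n, d (xs n) x <= c ^+ n.+1 * D0 / (1 - c).
  apply: geometric_sequence_limit => // n.
  by have [_ [_ close]] := AsP n; apply: close.
exists x => g.
have moved n : d (act g x) x <= 2 * D0 / (1 - c) * c ^+ n.
  have [[_ [invA _]] [diamA _]] := AsP n.
  apply: le_trans (displacement_le g invA (xsA n) (xs_x n)) _.
  have -> : 2 * D0 / (1 - c) * c ^+ n =
            2 * (c ^+ n.+1 * D0 / (1 - c)) + 2 * (c ^+ n * D0).
    by rewrite exprS; field; rewrite subr_eq0 gt_eqF.
  by rewrite lerD2l ler_pM2l.
apply: d_eq0; apply/le_anti.
by rewrite d_ge0 andbT (le0_of_geometric_bound c_ge0_lt1 moved).
Qed.

End GroupAction.
End MetricSpace.

Theorem corollary4p7 (R : realType) (M : Type) (d : M -> M -> R)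
  (G : Type) (mul : G -> G -> G) (one : G) (inv : G -> G)
  (act : G -> M -> M) :
  (* (G, mul, one, inv) is a group *)
  (forall a b c, mul a (mul b c) = mul (mul a b) c) ->
  (forall a, mul one a = a) -> (forall a, mul a one = a) ->
  (forall a, mul (inv a) a = one) -> (forall a, mul a (inv a) = one) ->
  (* act is an action of G on M *)
  (forall x, act one x = x) ->
  (forall s t x, act (mul s t) x = act s (act t x)) ->
  inhabited M ->
  is_metric d -> metric_bounded d -> URNS d -> admissible_compact d ->
  (forall s, orbit_nonexpansive d (act s)) ->
  exists x : M, forall s : G, act s x = x.
Proof.
move=> _ _ _ _ mulgV act1 actM [x0] metric [B bounded] [c [c_range urns]].
move=> compact nonexp.
exact: (common_fixed_point metric bounded mulgV act1 actM nonexp c_range urns x0).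
Qed.
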